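(* Let $\phi=\tilde p/p$ be an irreducible rational inner function on $\mathbb{D}^3$ of degree $(m,n,1)$, written with $p(z)=p_1(z_1,z_2)+z_3p_2(z_1,z_2)$ and $\tilde p(z)=z_3\tilde p_1(z_1,z_2)+\tilde p_2(z_1,z_2)$. Let $\zeta\in\mathbb{T}^3\cap\mathcal{Z}_{\tilde p}$. If the vertical line $\{(\zeta_1,\zeta_2)\}\times\mathbb{T}$ is not contained in $\mathcal{Z}_{\tilde p}$, then there is a neighborhood $U\subseteq\mathbb{C}^3$ of $\zeta$ such that \[\mathcal{Z}_{\tilde p}\cap U=\{(z_1,z_2,\psi^0(z_1,z_2)):(z_1,z_2)\in V\}\] for some open $V\subseteq\mathbb{C}^2$, where $\psi^0:=-\tilde p_2/\tilde p_1$ is analytic near $(\zeta_1,\zeta_2)$.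
   Context: $\mathbb{D}^3$, $\mathbb{T}^3$: open unit tridisk and unit 3-torus. A rational inner function (RIF) is a rational function holomorphic on $\mathbb{D}^3$ with unimodular radial limits a.e. on $\mathbb{T}^3$; it is written $\phi=\tilde p/p$ with $p$ zero-free on $\mathbb{D}^3$, $p$ and $\tilde p$ without common factors, $\dim(\mathcal{Z}_p\cap\mathbb{T}^3)\le1$. Degree $(m,n,1)$ means maximal powers $m,n,1$ in $z_1,z_2,z_3$, and $\tilde p(z)=z_1^mz_2^nz_3\overline{p(1/\bar z_1,1/\bar z_2,1/\bar z_3)}$; then $\tilde p_j(z_1,z_2)=z_1^mz_2^n\overline{p_j(1/\bar z_1,1/\bar z_2)}$ for $j=1,2$, and $p_1,p_2$ (resp. $\tilde p_1,\tilde p_2$) share no common factors. $\mathcal{Z}_q$ denotes the zero set of a polynomial $q$. *)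

From mathcomp Require Import all_boot all_order all_algebra.
From mathcomp Require Import reals.
From mathcomp Require Export complex.
From mathcomp Require Export mpoly.
Set Implicit Arguments. Unset Strict Implicit. Unset Printing Implicit Defensive.
Import GRing.Theory Num.Theory.
Local Open Scope ring_scope.
Local Open Scope complex_scope.

Definition pnt3 (R : realType) (a b c : R[i]) : 'I_3 -> R[i] :=
  fun i => if val i == 0%N then a else if val i == 1%N then b else c.
Definition pnt2 (R : realType) (a b : R[i]) : 'I_2 -> R[i] :=
  fun i => if val i == 0%N then a else b.

Definition degv (R : realType) (k : nat) (p : {mpoly R[i][k]}) (i : 'I_k) : nat :=
  (\max_(a <- msupp p) a i)%N.

Definition has_degree_mn1 (R : realType) (m n : nat) (p : {mpoly R[i][3]}) : Prop :=
  [/\ degv p (@Ordinal 3 0 isT) = m, degv p (@Ordinal 3 1 isT) = n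
    & degv p (@Ordinal 3 2 isT) = 1%N].

(* reflection at degree (m,n,1):
   ptilde(z) = z1^m z2^n z3 * conj (p (1/conj z1, 1/conj z2, 1/conj z3)) *)
Definition refl_mn1 (R : realType) (m n : nat) (p : {mpoly R[i][3]}) : {mpoly R[i][3]} :=
  \sum_(a <- msupp p)
     ((p@_a)^* *: 'X_[[multinom (nth 0%N [:: m; n; 1%N] i - a i)%N | i < 3]]).

Definition mdivides (R : realType) (d p : {mpoly R[i][3]}) : Prop :=
  exists q, p = d * q.
Definition nonconstant (R : realType) (d : {mpoly R[i][3]}) : bool := (1 < msize d)%N.
Definition irreducible_mpoly (R : realType) (p : {mpoly R[i][3]}) : Prop :=
  nonconstant p /\
  forall a b : {mpoly R[i][3]}, p = a * b -> ~~ nonconstant a \/ ~~ nonconstant b.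
Definition no_common_factor (R : realType) (p q : {mpoly R[i][3]}) : Prop :=
  forall d, mdivides d p -> mdivides d q -> ~~ nonconstant d.

Definition zero_free_D3 (R : realType) (p : {mpoly R[i][3]}) : Prop :=
  forall a b c : R[i], `|a| < 1 -> `|b| < 1 -> `|c| < 1 -> p.@[pnt3 a b c] != 0.

(* phi = ptilde/p is an irreducible rational inner function of degree (m,n,1),
   written in lowest terms *)
Definition irreducible_RIF_mn1 (R : realType) (m n : nat) (p : {mpoly R[i][3]}) : Prop :=
  [/\ has_degree_mn1 m n p, zero_free_D3 p,
      no_common_factor p (refl_mn1 m n p) & irreducible_mpoly p].

Definition open3 (R : realType) (U : R[i] -> R[i] -> R[i] -> Prop) : Prop :=
  forall a b c, U a b c -> exists r : R, 0 < r /\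
    forall x y w : R[i], `|x - a| < r%:C -> `|y - b| < r%:C -> `|w - c| < r%:C -> U x y w.
Definition open2 (R : realType) (V : R[i] -> R[i] -> Prop) : Prop :=
  forall a b, V a b -> exists r : R, 0 < r /\
    forall x y : R[i], `|x - a| < r%:C -> `|y - b| < r%:C -> V x y.

(** Since [ptilde] has degree one in [z3], [ptilde = z3 pt1 + pt2], and on the
    set where [pt1 <> 0] the zero set of [ptilde] is exactly the graph of
    [- pt2 / pt1].  If [pt1] vanished at [(zeta1, zeta2)], then so would [pt2]
    (as [ptilde zeta = 0]), and the whole vertical line through [zeta] would
    lie in the zero set.  Hence [(zeta1, zeta2)] lies in the set where [pt1]
    does not vanish, which is open because polynomials are continuous; we take
    [U] and [V] to be this set. *)

From mathcomp Require Import all_boot all_order all_algebra.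
From mathcomp Require Import reals complex mpoly.
Set Implicit Arguments. Unset Strict Implicit. Unset Printing Implicit Defensive.
Import Order.TTheory GRing.Theory Num.Theory.
Local Open Scope ring_scope.
Local Open Scope complex_scope.

Section LipschitzAt.
Variables (F : numFieldType) (k : nat) (x : 'I_k -> F).

Definition lipschitz_at (f : ('I_k -> F) -> F) : Prop :=
  exists2 K : F, 0 <= K & forall (y : 'I_k -> F) (d : F), 0 <= d -> d <= 1 ->
    (forall i, `|y i - x i| <= d) -> `|f y - f x| <= K * d.

Lemma eq_lipschitz_at f g : f =1 g -> lipschitz_at f -> lipschitz_at g.
Proof.
by move=> fg [K K0 Hf]; exists K => // y d d0 d1 yx; rewrite -!fg; apply: Hf.
Qed.

Lemma lipschitz_at_cst c : lipschitz_at (fun=> c).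
Proof. by exists 0 => // y d _ _ _; rewrite subrr normr0 mul0r. Qed.

Lemma lipschitz_at_proj i : lipschitz_at (fun y => y i).
Proof. by exists 1 => // y d _ _ yx; rewrite mul1r. Qed.

Lemma lipschitz_atD f g :
  lipschitz_at f -> lipschitz_at g -> lipschitz_at (fun y => f y + g y).
Proof.
move=> [Kf Kf0 Hf] [Kg Kg0 Hg]; exists (Kf + Kg); first exact: addr_ge0.
move=> y d d0 d1 yx; rewrite opprD addrACA mulrDl.
by apply: le_trans (ler_normD _ _) _; apply: lerD; [apply: Hf | apply: Hg].
Qed.

Lemma lipschitz_atM f g :
  lipschitz_at f -> lipschitz_at g -> lipschitz_at (fun y => f y * g y).
Proof.
move=> [Kf Kf0 Hf] [Kg Kg0 Hg].
exists ((`|f x| + Kf) * Kg + `|g x| * Kf).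
  by rewrite addr_ge0 ?mulr_ge0 ?addr_ge0.
move=> y d d0 d1 yx.
have fy_le : `|f y| <= `|f x| + Kf.
  rewrite -[f y](subrK (f x)) addrC; apply: le_trans (ler_normD _ _) _.
  rewrite lerD2l; apply: le_trans (Hf _ _ d0 d1 yx) _.
  by rewrite ler_piMr.
have -> : f y * g y - f x * g x = f y * (g y - g x) + (f y - f x) * g x.
  by rewrite mulrBr mulrBl addrA subrK.
rewrite [leRHS]mulrDl -!mulrA.
apply: le_trans (ler_normD _ _) _; rewrite !normrM; apply: lerD.
  by apply: ler_pM => //; apply: Hg.
by rewrite mulrC; apply: ler_wpM2l => //; apply: Hf.
Qed.

Lemma lipschitz_atX f n : lipschitz_at f -> lipschitz_at (fun y => f y ^+ n).
Proof.
move=> Hf; elim: n => [|n IH].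
  by apply: eq_lipschitz_at (lipschitz_at_cst 1) => y; rewrite expr0.
by apply: eq_lipschitz_at (lipschitz_atM Hf IH) => y; rewrite exprS.
Qed.

Lemma lipschitz_at_sum (I : Type) (s : seq I) (G : I -> ('I_k -> F) -> F) :
  (forall j, lipschitz_at (G j)) -> lipschitz_at (fun y => \sum_(j <- s) G j y).
Proof.
move=> HG; elim: s => [|j s IH].
  by apply: eq_lipschitz_at (lipschitz_at_cst 0) => y; rewrite big_nil.
by apply: eq_lipschitz_at (lipschitz_atD (HG j) IH) => y; rewrite big_cons.
Qed.

Lemma lipschitz_at_prod (I : Type) (s : seq I) (G : I -> ('I_k -> F) -> F) :
  (forall j, lipschitz_at (G j)) -> lipschitz_at (fun y => \prod_(j <- s) G j y).
Proof.
move=> HG; elim: s => [|j s IH].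
  by apply: eq_lipschitz_at (lipschitz_at_cst 1) => y; rewrite big_nil.
by apply: eq_lipschitz_at (lipschitz_atM (HG j) IH) => y; rewrite big_cons.
Qed.

Lemma lipschitz_at_meval (q : {mpoly F[k]}) : lipschitz_at (fun y => q.@[y]).
Proof.
apply: eq_lipschitz_at (fun y => esym (mevalE y q)) _.
apply: lipschitz_at_sum => a; apply: lipschitz_atM; first exact: lipschitz_at_cst.
by apply: lipschitz_at_prod => i; apply/lipschitz_atX/lipschitz_at_proj.
Qed.

Lemma meval_neq0_near (q : {mpoly F[k]}) : q.@[x] != 0 ->
  exists2 r : F, 0 < r & forall y, (forall i, `|y i - x i| < r) -> q.@[y] != 0.
Proof.
move=> qx_neq0; have [K K0 HK] := lipschitz_at_meval q.
pose a : F := `|q.@[x]|; have a_gt0 : 0 < a by rewrite normr_gt0.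
pose s : F := a + K + 1; have s_gt0 : 0 < s by rewrite /s ltr_wpDl ?addr_ge0 // ltW.
have d_gt0 : 0 < a / s by exact: divr_gt0.
have d_le1 : a / s <= 1 by rewrite ler_pdivrMr // mul1r /s -addrA lerDl addr_ge0.
(* at radius [a / s] the Lipschitz bound [K a / s] is still below [a] *)
exists (a / s) => // y yx; apply/eqP => qy0.
have := HK y _ (ltW d_gt0) d_le1 (fun i => ltW (yx i)).
rewrite qy0 sub0r normrN -/a mulrCA lt_geF // gtr_pMr //.
by rewrite ltr_pdivrMr // mul1r /s addrAC ltrDr addr_gt0.
Qed.

End LipschitzAt.

Lemma affine_eq0 (F : fieldType) (u v c : F) :
  u != 0 -> c * u + v = 0 <-> c = - v / u.
Proof.
move=> u_neq0; split => [/eqP | ->]; last by rewrite mulfVK // addNr.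
by rewrite addr_eq0 => /eqP <-; rewrite mulfK.
Qed.

Section ComplexPlane.
Variable R : realType.
Local Notation C := R[i].

Lemma complex_gt0_real (r : C) : 0 < r -> exists2 s : R, 0 < s & r = s%:C.
Proof.
move=> r_gt0; have /complex_realP [s r_def] := gtr0_real r_gt0.
by exists s; rewrite // -ltcR -r_def.
Qed.

Lemma open3_cylinder (V : C -> C -> Prop) : open2 V -> open3 (fun a b _ => V a b).
Proof.
move=> V_open a b c /V_open [r [r_gt0 Vr]]; exists r; split => // x y w xa yb _.
exact: Vr.
Qed.

Lemma open2_meval_neq0 (q : {mpoly C[2]}) : open2 (fun a b => q.@[pnt2 a b] != 0).
Proof.
move=> a b /meval_neq0_near [r' /complex_gt0_real [r r_gt0 ->] qr].
exists r; split => // x y xa yb; apply: qr => i.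
by rewrite /pnt2; case: ifP.
Qed.

End ComplexPlane.

Theorem lemma3p1 (R : realType) (m n : nat) (p : {mpoly R[i][3]})
  (p1 p2 pt1 pt2 : {mpoly R[i][2]}) (zeta1 zeta2 zeta3 : R[i]) :
  irreducible_RIF_mn1 m n p ->
  (forall a b c : R[i], p.@[pnt3 a b c] = p1.@[pnt2 a b] + c * p2.@[pnt2 a b]) ->
  (forall a b c : R[i],
     (refl_mn1 m n p).@[pnt3 a b c] = c * pt1.@[pnt2 a b] + pt2.@[pnt2 a b]) ->
  `|zeta1| = 1 -> `|zeta2| = 1 -> `|zeta3| = 1 ->
  (refl_mn1 m n p).@[pnt3 zeta1 zeta2 zeta3] = 0 ->
  ~ (forall t : R[i], `|t| = 1 -> (refl_mn1 m n p).@[pnt3 zeta1 zeta2 t] = 0) ->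
  exists (U : R[i] -> R[i] -> R[i] -> Prop) (V : R[i] -> R[i] -> Prop),
    [/\ open3 U, U zeta1 zeta2 zeta3, open2 V,
        (forall a b, V a b -> pt1.@[pnt2 a b] != 0) &
        forall a b c : R[i],
          ((refl_mn1 m n p).@[pnt3 a b c] = 0 /\ U a b c) <->
          (V a b /\ c = - pt2.@[pnt2 a b] / pt1.@[pnt2 a b])].
Proof.
move=> _ _ pt_affine _ _ _ pt_zeta no_vertical_line.
have pt1_zeta_neq0 : pt1.@[pnt2 zeta1 zeta2] != 0.
  apply/eqP => pt1_zeta0; apply: no_vertical_line => t _.
  rewrite pt_affine pt1_zeta0 mulr0 add0r in pt_zeta.
  by rewrite pt_affine pt1_zeta0 pt_zeta mulr0 addr0.
pose V a b := pt1.@[pnt2 a b] != 0.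
exists (fun a b _ => V a b), V; split => //.
- exact/open3_cylinder/open2_meval_neq0.
- exact: open2_meval_neq0.
move=> a b c; rewrite pt_affine.
by split=> [[/affine_eq0 Hc Vab] | [Vab /affine_eq0 Hc]]; split=> //; apply: Hc.
Qed.
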